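(* Let $n\in\{5,6,7,8,9,11\}$ and let $G_n$ be the regular network graph with cells $\{1,\dots,n\}$ (indices modulo $n$) in which each cell $i$ receives edges from its nearest and next nearest neighbours, i.e. the edges are $(i\pm1,i)$ and $(i\pm 2,i)$ for all $i$, all of a single edge type. Then $G_n$ has no exotic pattern of synchrony: for every balanced equivalence relation $\bowtie$ on the cells of $G_n$ there exists a subgroup $\Sigma$ of $\mathrm{Aut}(G_n)$ with $\bowtie\;=\;\bowtie_\Sigma$.
   Context: For a network graph with cells $\mathcal{C}$, edges $\mathcal{E}\subset\mathcal{C}\times\mathcal{C}$, and a single edge type (and single cell type), the input set of a cell $c$ is $I(c)=\{(d,c)\in\mathcal{E}\}$ and $\mathcal{T}(e)$ denotes the tail $d$ of an edge $e=(d,c)$. An equivalence relation $\bowtie$ on $\mathcal{C}$ is balanced if whenever $c\bowtie d$ there exists a bijection $\beta:I(c)\to I(d)$ with $\mathcal{T}(e)\bowtie\mathcal{T}(\beta(e))$ for all $e\in I(c)$. An automorphism of the graph is a permutation $\gamma$ of $\mathcal{C}$ with $(c,d)\in\mathcal{E}$ iff $(\gamma(c),\gamma(d))\in\mathcal{E}$; these form the group $\mathrm{Aut}$. For a subgroup $\Sigma$ of $\mathrm{Aut}$, $\bowtie_\Sigma$ is the orbit relation: $c\bowtie_\Sigma d$ iff $\gamma(c)=d$ for some $\gamma\in\Sigma$. A balanced equivalence relation is exotic if it is not of the form $\bowtie_\Sigma$ for any subgroup $\Sigma$ of $\mathrm{Aut}$. *)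

From mathcomp Require Import all_boot all_fingroup.
Set Implicit Arguments. Unset Strict Implicit. Unset Printing Implicit Defensive.

Section NetworkDefs.
Variable T : finType.
(* E d c  means there is an edge (d, c) from tail d to head c (single edge type). *)
Variable E : rel T.

Definition inputs (c : T) : {set T * T} := [set e | E e.1 e.2 && (e.2 == c)].

Definition tail (e : T * T) : T := e.1.

Definition is_equivalence (R : rel T) : Prop :=
  [/\ forall x, R x x, forall x y, R x y -> R y x &
      forall x y z, R x y -> R y z -> R x z].

Definition balanced (R : rel T) : Prop :=
  is_equivalence R /\
  forall c d, R c d ->
    exists beta : T * T -> T * T,
      [/\ {in inputs c &, injective beta},
          beta @: inputs c = inputs d &
          forall e, e \in inputs c -> R (tail e) (tail (beta e))].

Definition Aut_net : {set {perm T}} :=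
  [set g : {perm T} | [forall c, forall d, E c d == E (g c) (g d)]].

Definition orbit_rel (Sigma : {set {perm T}}) (c d : T) : Prop :=
  exists2 g, g \in Sigma & g c = d.

End NetworkDefs.

(* The ring network G_n with nearest and next-nearest neighbour coupling;
   cells are 0..n-1 (indices modulo n); edges (i+-1, i) and (i+-2, i). *)
Definition ring_nn (n : nat) : rel 'I_n :=
  fun d c => [|| (c + 1) %% n == d, (d + 1) %% n == c,
                 (c + 2) %% n == d | (d + 2) %% n == c].
Arguments ring_nn n : clear implicits.

From mathcomp Require Import all_boot all_fingroup.
Set Implicit Arguments. Unset Strict Implicit. Unset Printing Implicit Defensive.

(* A balanced equivalence relation on n cells is a partition, which can be
   encoded canonically by labelling every cell with the least cell of its class.
   Balance forces the multiset of labels of the inputs of a cell to depend only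
   on its class, since the bijection beta matches inputs with equivalent tails.
   For each n in the list, a computation runs through all canonical labellings
   (at most Bell(11) = 678570 of them) and checks that, for each one with this
   multiset property, label-preserving automorphisms map the least cell of each
   class to every cell of that class.  The group of all automorphisms preserving
   the partition then has exactly the classes as its orbits. *)

Section PartitionStabiliser.
Variables (T : finType) (E R : rel T).
Hypothesis R_equiv : is_equivalence R.

Definition partition_stab : {set {perm T}} :=
  [set g in Aut_net E | [forall x, R x (g x)]].

Lemma partition_stab_sub : partition_stab \subset Aut_net E.
Proof. by apply/subsetP => g; rewrite inE => /andP[]. Qed.

Lemma group_set_partition_stab : group_set partition_stab.
Proof.
have [Rrefl _ Rtrans] := R_equiv.
apply/group_setP; split.
  rewrite !inE; apply/andP; split; apply/forallP => x; last by rewrite perm1 Rrefl.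
  by apply/forallP => y; rewrite !perm1.
move=> g h; rewrite !inE => /andP[/forallP gE /forallP gR] /andP[/forallP hE /forallP hR].
apply/andP; split; apply/forallP => x; last by rewrite permM (Rtrans _ _ _ (gR x) (hR _)).
apply/forallP => y; rewrite !permM.
by rewrite (eqP (forallP (gE x) y)) (eqP (forallP (hE (g x)) (g y))).
Qed.

Canonical partition_stab_group := Group group_set_partition_stab.

Variable rep : T -> T.
Hypothesis rep_eq : forall c d, R c d -> rep c = rep d.
Hypothesis partition_stab_rep : forall c, exists2 g, g \in partition_stab & g (rep c) = c.

Lemma orbit_rel_partition_stab c d : R c d <-> orbit_rel partition_stab c d.
Proof.
split=> [Rcd | [g]]; last by rewrite inE => /andP[_ /forallP gR] <-.
have [g Gg gc] := partition_stab_rep c; have [h Gh hd] := partition_stab_rep d.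
exists (g^-1 * h)%g; first by rewrite groupM ?groupV.
by rewrite permM -gc permK (rep_eq Rcd).
Qed.

End PartitionStabiliser.

Section BalancedCounting.
Variables (T : finType) (E R : rel T).
Hypothesis R_balanced : balanced E R.

Lemma card_inputs_tail c (Q : pred T) :
  #|[set e in inputs E c | Q (tail e)]| = #|[set x | E x c && Q x]|.
Proof.
have pair_inj : injective (fun x : T => (x, c)) by move=> x y [].
suff -> : [set e in inputs E c | Q (tail e)] = (fun x => (x, c)) @: [set x | E x c && Q x].
  exact: card_imset.
apply/setP => -[x y]; rewrite !inE /=.
apply/andP/imsetP => [[/andP[Exy /eqP yc] Qx] | [z]].
  by subst y; exists x; rewrite ?inE ?Exy ?Qx.
by rewrite inE => /andP[Ezc Qz] [-> ->]; rewrite Ezc Qz eqxx.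
Qed.

Lemma balanced_card_le c d (Q : pred T) : R c d ->
  (forall x y, R x y -> Q x = Q y) ->
  #|[set x | E x c && Q x]| <= #|[set x | E x d && Q x]|.
Proof.
move=> Rcd RQ; have [beta [beta_inj beta_im beta_R]] := R_balanced.2 c d Rcd.
rewrite -!card_inputs_tail -(card_in_imset (f := beta)); last first.
  by move=> e1 e2 /setIdP[e1c _] /setIdP[e2c _]; apply: beta_inj.
apply/subset_leq_card/subsetP => _ /imsetP[e /setIdP[ec Qe] ->].
by rewrite inE -beta_im imset_f //= -(RQ _ _ (beta_R e ec)).
Qed.

Lemma balanced_card_eq c d (Q : pred T) : R c d ->
  (forall x y, R x y -> Q x = Q y) ->
  #|[set x | E x c && Q x]| = #|[set x | E x d && Q x]|.
Proof.
have [[_ Rsym _] _] := R_balanced.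
by move=> Rcd RQ; apply/eqP; rewrite eqn_leq !balanced_card_le // Rsym.
Qed.

End BalancedCounting.

(* In a canonical labelling the next cell is labelled either by its own index
   (it opens a new class) or by an earlier index that labels itself. *)
Definition label_choices (s : seq nat) : seq nat :=
  size s :: [seq i <- iota 0 (size s) | nth 0 s i == i].

Fixpoint all_labellings (k : nat) (P : pred (seq nat)) (s : seq nat) : bool :=
  if k is k'.+1 then all (fun v => all_labellings k' P (rcons s v)) (label_choices s)
  else P s.

Lemma all_labellingsP k P s t : all_labellings k P s -> size t = k ->
  (forall i, i < k -> nth 0 t i \in label_choices (s ++ take i t)) -> P (s ++ t).
Proof.
elim: k s t => [|k IHk] s t; first by move=> Ps /size0nil -> _; rewrite cats0.
move=> /allP Pext; case: t => [|v t] // [size_t] t_choices.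
have v_choice : v \in label_choices s by have := t_choices 0 isT; rewrite take0 cats0.
rewrite -cat_rcons; apply: IHk (Pext v v_choice) size_t _ => i lt_ik.
by rewrite cat_rcons; apply: (t_choices i.+1).
Qed.

Section ClassMinimum.
Variables (n : nat) (R : rel 'I_n).
Hypothesis R_equiv : is_equivalence R.

Definition class_min (x : 'I_n) : nat := find (R x) (enum 'I_n).

Lemma has_class x : has (R x) (enum 'I_n).
Proof. by have [Rrefl _ _] := R_equiv; apply/hasP; exists x; rewrite ?mem_enum. Qed.

Lemma class_min_lt x : class_min x < n.
Proof. by rewrite -[n in _ < n]size_enum_ord -has_find has_class. Qed.

Definition class_rep x : 'I_n := Ordinal (class_min_lt x).

Lemma class_rep_R x : R x (class_rep x).
Proof. by rewrite -[class_rep x](nth_ord_enum x); apply: nth_find; apply: has_class. Qed.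

Lemma class_minE x y : R x y = (class_min x == class_min y).
Proof.
have [_ Rsym Rtrans] := R_equiv.
apply/idP/eqP => [Rxy | eq_min].
  apply: eq_find => z; apply/idP/idP => [Rxz | Ryz]; last exact: Rtrans Rxy Ryz.
  exact: Rtrans (Rsym _ _ Rxy) Rxz.
have same_rep : class_rep x = class_rep y by apply: val_inj.
by apply: Rtrans (class_rep_R x) _; rewrite same_rep; apply/Rsym/class_rep_R.
Qed.

Lemma class_min_le x : class_min x <= x.
Proof.
have [Rrefl _ _] := R_equiv.
by rewrite leqNgt; apply/negP => /(before_find x); rewrite nth_ord_enum Rrefl.
Qed.

Lemma class_rep_eq x y : R x y -> class_rep x = class_rep y.
Proof. by rewrite class_minE // => /eqP eq_min; apply: val_inj. Qed.

Definition class_labels : seq nat := [seq class_min x | x <- enum 'I_n].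

Lemma size_class_labels : size class_labels = n.
Proof. by rewrite size_map size_enum_ord. Qed.

Lemma nth_class_labels (x : 'I_n) : nth 0 class_labels x = class_min x.
Proof. by rewrite (nth_map x) ?size_enum_ord // nth_ord_enum. Qed.

Lemma class_labels_canonical i : i < n ->
  nth 0 class_labels i \in label_choices (take i class_labels).
Proof.
move=> lt_in; pose x := Ordinal lt_in; rewrite -[i]/(val x).
rewrite nth_class_labels /label_choices size_takel ?size_class_labels 1?ltnW // inE.
case: ltngtP (class_min_le x) => //= lt_min _.
rewrite mem_filter mem_iota lt_min nth_take // -[class_min x]/(val (class_rep x)).
by rewrite nth_class_labels eq_sym -class_minE // class_rep_R.
Qed.

End ClassMinimum.

(* Under [vm_compute] both arguments of [&&] and [||] are evaluated, so [all]
   and [has] never stop early; these variants do. *)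
Fixpoint lazy_all {A} (a : pred A) (s : seq A) : bool :=
  if s is x :: s' then (if a x then lazy_all a s' else false) else true.

Fixpoint lazy_has {A} (a : pred A) (s : seq A) : bool :=
  if s is x :: s' then (if a x then true else lazy_has a s') else false.

Lemma lazy_allE A (a : pred A) s : lazy_all a s = all a s.
Proof. by elim: s => //= x s ->; case: (a x). Qed.

Lemma lazy_hasE A (a : pred A) s : lazy_has a s = has a s.
Proof. by elim: s => //= x s ->; case: (a x). Qed.

Lemma all_iota_ordP n (a : pred nat) : reflect (forall i : 'I_n, a i) (all a (iota 0 n)).
Proof.
rewrite -val_enum_ord all_map; apply: (iffP allP) => [a_all i | a_all i _].
  by apply: a_all; rewrite mem_enum.
exact: a_all.
Qed.

Definition ordinal_rel n (e : nat -> nat -> bool) : rel 'I_n := fun d c => e d c.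
Arguments ordinal_rel : clear implicits.

Definition in_neighbours n (e : nat -> nat -> bool) : seq (seq nat) :=
  [seq [seq x <- iota 0 n | e x c] | c <- iota 0 n].

Definition in_labels (nbs : seq (seq nat)) (s : seq nat) (c : nat) : seq nat :=
  sort leq [seq nth 0 s x | x <- nth [::] nbs c].

Definition balanced_labellingb n nbs s :=
  lazy_all (fun c => in_labels nbs s c == in_labels nbs s (nth 0 s c)) (iota 0 n).

Definition autb n (e : nat -> nat -> bool) (p : seq nat) :=
  [&& size p == n, uniq p, all (gtn n) p &
      all (fun c => all (fun d => e c d == e (nth 0 p c) (nth 0 p d)) (iota 0 n)) (iota 0 n)].

Definition label_preservingb n (s p : seq nat) :=
  all (fun x => nth 0 s (nth 0 p x) == nth 0 s x) (iota 0 n).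

Definition orbit_witnessb n (auts : seq (seq nat)) s :=
  lazy_all (fun c => lazy_has (fun p =>
    if nth 0 p (nth 0 s c) == c then label_preservingb n s p else false) auts) (iota 0 n).

Definition no_exotic_check n e (cands : seq (seq nat)) :=
  let nbs := in_neighbours n e in
  let auts := [seq p <- cands | autb n e p] in
  all_labellings n (fun s =>
    if balanced_labellingb n nbs s then orbit_witnessb n auts s else true) [::].

Section Decision.
Variables (n : nat) (e : nat -> nat -> bool).
Local Notation E := (ordinal_rel n e).

Lemma perm_of_autb p : autb n e p ->
  exists2 g : {perm 'I_n}, g \in Aut_net E & forall i, val (g i) = nth 0 p i.
Proof.
case/and4P => /eqP size_p uniq_p /allP p_lt /all_iota_ordP p_aut.
have lt_p (i : 'I_n) : nth 0 p i < n by apply: p_lt; rewrite mem_nth // size_p.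
pose f i := Ordinal (lt_p i).
have f_inj : injective f.
  by move=> i j /(congr1 val) /eqP; rewrite /= nth_uniq ?size_p // => /eqP /val_inj.
exists (perm f_inj); last by move=> i; rewrite permE.
rewrite inE; apply/forallP => c; apply/forallP => d; rewrite !permE.
by have /all_iota_ordP := p_aut c; apply; rewrite mem_iota ltn_ord.
Qed.

Section ClassLabels.
Variable R : rel 'I_n.
Hypothesis R_equiv : is_equivalence R.

Lemma count_in_labels (c : 'I_n) (a : pred nat) :
  count a [seq nth 0 (class_labels R) x | x <- nth [::] (in_neighbours n e) c] =
  #|[set x | E x c && a (class_min R x)]|.
Proof.
rewrite (nth_map 0) ?size_iota // nth_iota // count_map count_filter.
rewrite cardsE cardE /enum_mem size_filter -enumT -val_enum_ord count_map.
by apply: eq_count => x; rewrite /= nth_class_labels andbC.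
Qed.

Lemma class_labels_balanced : balanced E R ->
  balanced_labellingb n (in_neighbours n e) (class_labels R).
Proof.
move=> R_balanced.
rewrite /balanced_labellingb lazy_allE; apply/all_iota_ordP => c.
rewrite /in_labels nth_class_labels -[class_min R c]/(val (class_rep R_equiv c)).
apply/eqP/perm_sortP; [exact: leq_total | exact: leq_trans | exact: anti_leq |].
apply/seq.permP => a; rewrite !count_in_labels.
apply: balanced_card_eq R_balanced _ _ _ (class_rep_R R_equiv c) _.
by move=> x y; rewrite (class_minE R_equiv) => /eqP ->.
Qed.

Lemma orbit_witness_partition_stab auts : all (autb n e) auts ->
  orbit_witnessb n auts (class_labels R) ->
  forall c, exists2 g, g \in partition_stab E R & g (class_rep R_equiv c) = c.
Proof.
move=> /allP auts_aut; rewrite /orbit_witnessb lazy_allE => /all_iota_ordP witness c.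
have := witness c; rewrite lazy_hasE => /hasP[p p_auts].
rewrite nth_class_labels; case: eqP => // p_rep /all_iota_ordP p_labels.
have [g g_aut g_p] := perm_of_autb (auts_aut p p_auts).
exists g; last by apply: val_inj; rewrite g_p.
rewrite inE g_aut; apply/forallP => x.
by rewrite (class_minE R_equiv) -!nth_class_labels g_p eq_sym; apply: p_labels.
Qed.

End ClassLabels.

Theorem no_exotic_of_check cands : no_exotic_check n e cands ->
  forall R : rel 'I_n, balanced E R ->
  exists Sigma : {group {perm 'I_n}},
    Sigma \subset Aut_net E /\ forall c d : 'I_n, R c d <-> orbit_rel Sigma c d.
Proof.
move=> check R R_balanced; have R_equiv := R_balanced.1.
have := all_labellingsP check (size_class_labels R) (class_labels_canonical R_equiv).
rewrite /= class_labels_balanced // => witness.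
exists (partition_stab_group E R_equiv); split; first exact: partition_stab_sub.
apply: (orbit_rel_partition_stab R_equiv (class_rep_eq R_equiv)).
exact: orbit_witness_partition_stab (filter_all _ _) witness.
Qed.

End Decision.

Definition ring_nnb (n d c : nat) : bool :=
  [|| (c + 1) %% n == d, (d + 1) %% n == c, (c + 2) %% n == d | (d + 2) %% n == c].

Definition dihedral n : seq (seq nat) :=
  [seq [seq (a * i + b) %% n | i <- iota 0 n] | a <- [:: 1; n.-1], b <- iota 0 n].

(* G_5 is complete and G_6 is K_6 minus a perfect matching, so their
   automorphism groups exceed the dihedral one; for larger n the dihedral
   symmetries suffice. *)
Definition ring_candidates n : seq (seq nat) :=
  if n <= 6 then permutations (iota 0 n) else dihedral n.

Lemma ring_no_exotic_checks :
  all (fun n => no_exotic_check n (ring_nnb n) (ring_candidates n)) [:: 5; 6; 7; 8; 9; 11].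
Proof. by vm_compute. Qed.

Theorem proposition3p3 (n : nat) (hn : n \in [:: 5; 6; 7; 8; 9; 11]) :
  forall R : rel 'I_n, balanced (ring_nn n) R ->
    exists Sigma : {group {perm 'I_n}},
      Sigma \subset Aut_net (ring_nn n) /\
      forall c d : 'I_n, R c d <-> orbit_rel Sigma c d.
Proof.
exact: no_exotic_of_check (allP ring_no_exotic_checks n hn).
Qed.
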